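(* The (isomorphism classes of) indecomposable modules are not dense in the space of isomorphism classes of q-tame upper semicontinuous $n$-parameter persistence modules endowed with the interleaving distance.
   Context: Fix a field $\mathbb{k}$ and $n\ge1$. An $n$-parameter persistence module is a functor $V:\mathbf{R}^n\to\mathbf{Vect}_{\mathbb{k}}$ ($\mathbf{R}^n$ with componentwise order), structure maps $V_{s,t}$. Write $s\ll t$ if $s_i<t_i$ for all $i$; $s+\varepsilon$ adds $\varepsilon$ to each coordinate. $V$ is q-tame if $V_{s,t}$ has finite rank whenever $s\ll t$, and upper semicontinuous if $V_s\to\lim_{\varepsilon>0}V_{s+\varepsilon}$ is an isomorphism for all $s$. Shifts $V[\varepsilon]_s=V_{s+\varepsilon}$, $\eta_\varepsilon:V\to V[\varepsilon]$ the structure maps; an $\varepsilon$-interleaving is $f:V\to W[\varepsilon]$, $g:W\to V[\varepsilon]$ with $g[\varepsilon]f=\eta_{2\varepsilon}$, $f[\varepsilon]g=\eta_{2\varepsilon}$; $d_I(V,W)$ is the infimum of $\varepsilon$ admitting an $\varepsilon$-interleaving. *)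

From HB Require Import structures.
From mathcomp Require Import all_boot all_order all_algebra.
From mathcomp Require Import boolp classical_sets reals constructive_ereal ereal.

Set Implicit Arguments.
Unset Strict Implicit.
Unset Printing Implicit Defensive.

Import Order.TTheory GRing.Theory Num.Theory.
Local Open Scope ring_scope.
Local Open Scope classical_set_scope.

Section PersistenceModules.
Variables (R : realType) (n : nat) (k : fieldType).

Definition pt := 'I_n -> R.
Definition ple (s t : pt) : bool := [forall i, s i <= t i].
Definition pll (s t : pt) : bool := [forall i, s i < t i].
Definition shift (e : R) (s : pt) : pt := fun i => s i + e.

Definition lin_fun (U V : lmodType k) (f : U -> V) : Prop :=
  forall a u v, f (a *: u + v) = a *: f u + f v.

(* An n-parameter persistence module: a functor R^n -> Vect_k.
   Structure maps V_{s,t} are indexed by a (boolean, hence unique) proof of s <= t. *)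
Record pmod := PMod {
  pm_obj : pt -> lmodType k;
  pm_map : forall s t, ple s t -> pm_obj s -> pm_obj t;
  pm_lin : forall s t (h : ple s t), lin_fun (pm_map h);
  pm_id : forall s (h : ple s s) v, pm_map h v = v;
  pm_comp : forall s t u (h1 : ple s t) (h2 : ple t u) (h3 : ple s u) v,
      pm_map h2 (pm_map h1 v) = pm_map h3 v
}.
Arguments pm_map p {s t} _ _.

Definition pm_zero (V : pmod) : Prop := forall s (v : pm_obj V s), v = 0.

Definition pm_iso (V W : pmod) : Prop :=
  exists f : forall s, pm_obj V s -> pm_obj W s,
    [/\ forall s, lin_fun (f s),
        forall s t (h : ple s t) v, f t (pm_map V h v) = pm_map W h (f s v)
      & forall s, bijective (f s)].

Section Sum.
Variables (A B : pmod).
Definition sum_obj (s : pt) : lmodType k := (pm_obj A s * pm_obj B s)%type.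
Definition sum_map s t (h : ple s t) (p : sum_obj s) : sum_obj t :=
  (pm_map A h p.1, pm_map B h p.2).
Lemma sum_lin s t (h : ple s t) : lin_fun (sum_map h).
Proof. by move=> a [u1 u2] [v1 v2]; rewrite /sum_map /= !pm_lin. Qed.
Lemma sum_id s (h : ple s s) v : sum_map h v = v.
Proof. by case: v => v1 v2; rewrite /sum_map /= !pm_id. Qed.
Lemma sum_comp s t u (h1 : ple s t) (h2 : ple t u) (h3 : ple s u) v :
  sum_map h2 (sum_map h1 v) = sum_map h3 v.
Proof. by case: v => v1 v2; rewrite /sum_map /= !(pm_comp _ _ h3). Qed.
Definition pm_sum : pmod := PMod sum_lin sum_id sum_comp.
End Sum.

Definition indecomposable (V : pmod) : Prop :=
  ~ pm_zero V /\
  forall A B : pmod, pm_iso V (pm_sum A B) -> pm_zero A \/ pm_zero B.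

Definition finite_rank (U W : lmodType k) (f : U -> W) : Prop :=
  exists l : seq W, forall v, exists c : 'I_(size l) -> k,
    f v = \sum_(i < size l) c i *: l`_i.

Definition qtame (V : pmod) : Prop :=
  forall s t (h : ple s t), pll s t -> finite_rank (pm_map V h).

(* upper semicontinuous: the canonical map V_s -> lim_{eps>0} V_{s+eps}
   (the limit being the space of compatible families) is bijective
   (equivalently, a linear isomorphism) *)
Definition usc (V : pmod) : Prop :=
  forall s : pt,
    (forall v : pm_obj V s,
        (forall e (h : ple s (shift e s)), 0 < e -> pm_map V h v = 0) -> v = 0)
    /\
    (forall x : forall e : R, pm_obj V (shift e s),
        (forall e e' (h : ple (shift e s) (shift e' s)), 0 < e -> e <= e' ->
            pm_map V h (x e) = x e') ->
        exists v : pm_obj V s,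
          forall e (h : ple s (shift e s)), 0 < e -> pm_map V h v = x e).

Definition interleaving (e : R) (V W : pmod)
    (f : forall s, pm_obj V s -> pm_obj W (shift e s))
    (g : forall s, pm_obj W s -> pm_obj V (shift e s)) : Prop :=
  (forall s, lin_fun (f s)) /\
  (forall s, lin_fun (g s)) /\
  (forall s t (h : ple s t) (h' : ple (shift e s) (shift e t)) v,
      f t (pm_map V h v) = pm_map W h' (f s v)) /\
  (forall s t (h : ple s t) (h' : ple (shift e s) (shift e t)) v,
      g t (pm_map W h v) = pm_map V h' (g s v)) /\
  (forall s (h : ple s (shift e (shift e s))) v,
      g (shift e s) (f s v) = pm_map V h v) /\
  (forall s (h : ple s (shift e (shift e s))) v,
      f (shift e s) (g s v) = pm_map W h v).

Definition interleaved (e : R) (V W : pmod) : Prop :=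
  exists f g, @interleaving e V W f g.

Definition dI (V W : pmod) : \bar R :=
  ereal_inf [set e%:E | e in [set e : R | 0 <= e /\ interleaved e V W]].

End PersistenceModules.

From HB Require Import structures.
From mathcomp Require Import all_boot all_order all_algebra.
From mathcomp Require Import boolp classical_sets reals constructive_ereal ereal.

Set Implicit Arguments.
Unset Strict Implicit.
Unset Printing Implicit Defensive.

Import Order.TTheory GRing.Theory Num.Theory.
Local Open Scope ring_scope.

(** Take for V the constant module k^2. If W is e-interleaved with V by f and g,
    then the first coordinate of g is a natural retraction of W onto the constant
    module k, a section being f on the first summand, shifted back by e. Hence
    W ~ k (+) ker, and if W is indecomposable the kernel vanishes. But f applied to
    the second summand is a nonzero element of that kernel, since g sends it back to
    (0, 1). So no indecomposable module is interleaved with V at any scale, and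
    d_I(V, W) = +oo. *)

Section LinFun.
Variables (k : fieldType) (U V : lmodType k) (f : U -> V).

Definition linear_of (fL : lin_fun f) : {linear U -> V} :=
  HB.pack_for {linear U -> V} f (GRing.isLinear.Build k U V *:%R f fL).

End LinFun.

Section Kernel.
Variables (k : pzRingType) (U V : lmodType k) (f : {linear U -> V}).

Definition in_kernel : {pred U} := [pred u | f u == 0].

Lemma in_kernel_closed : subsemimod_closed in_kernel.
Proof.
split; [split|] => [|u v|a u]; rewrite !inE ?linear0 //.
  by move=> /eqP fu /eqP fv; rewrite linearD fu fv addr0.
by move=> /eqP fu; rewrite linearZZ fu scaler0.
Qed.

HB.instance Definition _ := GRing.isSubmodClosed.Build k U in_kernel in_kernel_closed.

Record kernel := Kernel { kernel_val : U; kernel_valP : kernel_val \in in_kernel }.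

HB.instance Definition _ := [isSub for kernel_val].
HB.instance Definition _ := [Choice of kernel by <:].
HB.instance Definition _ := [SubChoice_isSubLmodule of kernel by <:].

End Kernel.

Lemma pm_map0 (R : realType) (n : nat) (k : fieldType) (V : pmod R n k) s t
  (h : ple s t) : pm_map (p := V) h 0 = 0.
Proof. exact: raddf0 (linear_of (pm_lin (p := V) h)). Qed.

Lemma pm_mapB (R : realType) (n : nat) (k : fieldType) (V : pmod R n k) s t
  (h : ple s t) u v : pm_map (p := V) h (u - v) = pm_map h u - pm_map h v.
Proof. exact: (raddfB (linear_of (pm_lin (p := V) h)) u v). Qed.

Section Retract.
Variables (R : realType) (n : nat) (k : fieldType) (W A : pmod R n k).
Variable p : forall t, {linear pm_obj W t -> pm_obj A t}.
Hypothesis p_nat :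
  forall s t (h : ple s t) w, p t (pm_map (p := W) h w) = pm_map (p := A) h (p s w).

Lemma ker_mapP s t (h : ple s t) (b : kernel (p s)) :
  pm_map (p := W) h (val b) \in in_kernel (p t).
Proof. by rewrite inE p_nat (eqP (kernel_valP b)) pm_map0. Qed.

Definition ker_map s t (h : ple s t) (b : kernel (p s)) : kernel (p t) :=
  Kernel (ker_mapP h b).

Lemma ker_map_lin s t (h : ple s t) : lin_fun (ker_map h).
Proof. by move=> a u v; apply: val_inj; rewrite /= pm_lin. Qed.

Lemma ker_maiKd s (h : ple s s) b : ker_map h b = b.
Proof. by apply: val_inj; rewrite /= pm_id. Qed.

Lemma ker_map_comp s t u (h1 : ple s t) (h2 : ple t u) (h3 : ple s u) b :
  ker_map h2 (ker_map h1 b) = ker_map h3 b.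
Proof. by apply: val_inj; rewrite /= (pm_comp _ _ h3). Qed.

Definition pm_ker : pmod R n k := PMod ker_map_lin ker_maiKd ker_map_comp.

Variable i : forall t, {linear pm_obj A t -> pm_obj W t}.
Hypothesis i_nat :
  forall s t (h : ple s t) a, i t (pm_map (p := A) h a) = pm_map (p := W) h (i s a).
Hypothesis iK : forall t, cancel (i t) (p t).

Lemma retract_complementP t (w : pm_obj W t) : w - i t (p t w) \in in_kernel (p t).
Proof. by rewrite inE linearB /= iK subrr. Qed.

Definition retract_split t (w : pm_obj W t) : pm_obj (pm_sum A pm_ker) t :=
  (p t w, Kernel (retract_complementP w)).

Lemma retract_split_iso : pm_iso W (pm_sum A pm_ker).
Proof.
exists retract_split; split => [t a u v | s t h w | t].
- congr pair; first exact: linearP.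
  by apply: val_inj; rewrite /= !linearP /= scalerBr scalerN addrACA.
- congr pair; first exact: p_nat.
  by apply: val_inj; rewrite /= p_nat i_nat pm_mapB.
- exists (fun x => i t x.1 + val x.2) => [w | [a b]]; first by rewrite /= addrC subrK.
  have pb : p t (val b) = 0 := eqP (kernel_valP b).
  congr pair; first by rewrite /= linearD /= iK pb addr0.
  by apply: val_inj; rewrite /= linearD /= iK pb addr0 addrAC subrr add0r.
Qed.

Lemma indecomposable_retract_ker0 : indecomposable W -> ~ pm_zero A ->
  forall t w, p t w = 0 -> w = 0.
Proof.
move=> [_ W_indec] A_neq0 t w /eqP pw0.
case: (W_indec _ _ retract_split_iso) => // ker0.
by have /(congr1 val) := ker0 t (Kernel (pw0 : w \in in_kernel (p t))).
Qed.

End Retract.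

Section Shift.
Variables (R : realType) (n : nat).
Implicit Types (s t : pt R n) (e : R).

Lemma ple_trans s t u : ple s t -> ple t u -> ple s u.
Proof.
by move=> /forallP st /forallP tu; apply/forallP => j; exact: le_trans (st j) (tu j).
Qed.

Lemma ple_shift e s : 0 <= e -> ple s (shift e s).
Proof. by move=> e_ge0; apply/forallP => j; rewrite /shift lerDl. Qed.

Lemma ple_shiftl e e' s : e <= e' -> ple (shift e s) (shift e' s).
Proof. by move=> le_ee'; apply/forallP => j; rewrite /shift lerD2l. Qed.

Lemma ple_shiftr e s t : ple s t -> ple (shift e s) (shift e t).
Proof. by move=> /forallP st; apply/forallP => j; rewrite /shift lerD2r. Qed.

Lemma ple_shiftNK e t : ple (shift e (shift (- e) t)) t.
Proof. by apply/forallP => j; rewrite /shift subrK. Qed.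

End Shift.

Section ConstModule.
Variables (R : realType) (n : nat) (k : fieldType) (M : lmodType k).

Definition pm_const : pmod R n k :=
  @PMod R n k (fun=> M) (fun s t _ m => m)
    (fun _ _ _ _ _ _ => erefl) (fun _ _ _ => erefl) (fun _ _ _ _ _ _ _ => erefl).

Lemma pm_const_usc : usc pm_const.
Proof.
move=> s; split=> [v v_lim0 | x x_compat].
  exact: v_lim0 1 (ple_shift s ler01) ltr01.
exists (x 1) => e h e_gt0 /=.
have [le_e1 | /ltW le_1e] := lerP e 1.
  exact: esym (x_compat e 1 (ple_shiftl s le_e1) e_gt0 le_e1).
exact: x_compat 1 e (ple_shiftl s le_1e) ltr01 le_1e.
Qed.

End ConstModule.

Lemma finite_rank_vect (k : fieldType) (U : lmodType k) (V : vectType k) (f : U -> V) :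
  finite_rank f.
Proof.
exists (vbasis fullv) => u; exists (fun j => coord (in_tuple (vbasis fullv)) j (f u)).
apply: coord_span; rewrite /= (span_basis (vbasisP fullv)).
exact: memvf.
Qed.

Lemma pm_const_qtame (R : realType) (n : nat) (k : fieldType) (M : vectType k) :
  qtame (pm_const R n M).
Proof. by move=> s t h _; exact: finite_rank_vect. Qed.

Section ConstPairInterleaving.
Local Unset Implicit Arguments.
Variables (R : realType) (n : nat) (k : fieldType) (M N : lmodType k).
Variables (W : pmod R n k) (e : R).
Local Notation V := (pm_const R n (M * N)%type).
Hypothesis e_ge0 : 0 <= e.
Variables (f : forall s, pm_obj V s -> pm_obj W (shift e s))
          (g : forall s, pm_obj W s -> pm_obj V (shift e s)).
Hypotheses (f_lin : forall s, lin_fun (f s)) (g_lin : forall s, lin_fun (g s)).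
Hypothesis f_nat : forall s t (h : ple s t) (h' : ple (shift e s) (shift e t)) v,
  f t (pm_map (p := V) h v) = pm_map (p := W) h' (f s v).
Hypothesis g_nat : forall s t (h : ple s t) (h' : ple (shift e s) (shift e t)) w,
  g t (pm_map (p := W) h w) = pm_map (p := V) h' (g s w).
Hypothesis g_f : forall s (h : ple s (shift e (shift e s))) v,
  g (shift e s) (f s v) = pm_map (p := V) h v.

Lemma ple_shift2 (s : pt R n) : ple s (shift e (shift e s)).
Proof. exact: ple_trans (ple_shift s e_ge0) (ple_shift _ e_ge0). Qed.

Lemma retract_fst_lin t : lin_fun (fun w : pm_obj W t => (g t w).1 : M).
Proof. by move=> a u v; rewrite g_lin. Qed.

Definition retract_fst t : {linear pm_obj W t -> pm_obj (pm_const R n M) t} :=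
  linear_of (retract_fst_lin t).

Lemma retract_fst_nat s t (h : ple s t) w :
  retract_fst t (pm_map (p := W) h w) =
  pm_map (p := pm_const R n M) h (retract_fst s w).
Proof. by rewrite /= (g_nat s t h (ple_shiftr e h)). Qed.

(* [shift e (shift (- e) t)] is only propositionally equal to [t], hence the
   structure map. *)
Definition section_fst_fun t (m : M) : pm_obj W t :=
  pm_map (p := W) (ple_shiftNK e t) (f (shift (- e) t) (m, 0)).

Lemma section_fst_lin t : lin_fun (section_fst_fun t).
Proof.
move=> a m m'; rewrite /section_fst_fun -pm_lin -f_lin.
by congr (pm_map _ (f _ _)); congr pair; rewrite /= scaler0 addr0.
Qed.

Definition section_fst t : {linear pm_obj (pm_const R n M) t -> pm_obj W t} :=
  linear_of (section_fst_lin t).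

Lemma section_fst_nat s t (h : ple s t) m :
  section_fst t (pm_map (p := pm_const R n M) h m) =
  pm_map (p := W) h (section_fst s m).
Proof.
have h' : ple (shift (- e) s) (shift (- e) t) by exact: ple_shiftr.
have hst : ple (shift e (shift (- e) s)) t := ple_trans (ple_shiftNK e s) h.
rewrite /= /section_fst_fun (pm_comp _ _ hst).
rewrite -[(m, 0)]/(pm_map (p := V) h' (m, 0)).
by rewrite (f_nat _ _ h' (ple_shiftr e h')) (pm_comp _ _ hst).
Qed.

Lemma section_fstK t : cancel (section_fst t) (retract_fst t).
Proof.
move=> m; rewrite /= /section_fst_fun (g_nat _ _ _ (ple_shiftr e (ple_shiftNK e t))).
by rewrite (g_f _ (ple_shift2 _)).
Qed.

Lemma const_pair_interleaving_absurd :
  indecomposable W -> (exists m : M, m != 0) -> (exists y : N, y != 0) -> False.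
Proof.
move=> W_indec [m m_neq0] [y y_neq0].
pose s0 : pt R n := fun=> 0.
have M_neq0 : ~ pm_zero (pm_const R n M).
  by move=> /(_ s0 m) /eqP; rewrite (negbTE m_neq0).
have g_fy : g _ (f s0 (0, y)) = (0, y) := g_f s0 (ple_shift2 s0) (0, y).
have f_y0 : f s0 (0, y) = 0.
  apply: (indecomposable_retract_ker0 retract_fst_nat section_fst_nat section_fstK) => //.
  by rewrite /= g_fy.
have g0 : g (shift e s0) 0 = 0 := raddf0 (linear_of (g_lin _)).
by move: g_fy; rewrite f_y0 g0 => /(congr1 snd) /esym /eqP; rewrite (negbTE y_neq0).
Qed.

End ConstPairInterleaving.

Lemma const_pair_not_interleaved (R : realType) (n : nat) (k : fieldType)
    (M N : lmodType k) (W : pmod R n k) (e : R) :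
  (exists m : M, m != 0) -> (exists y : N, y != 0) -> indecomposable W -> 0 <= e ->
  ~ interleaved e (pm_const R n (M * N)%type) W.
Proof.
move=> M_neq0 N_neq0 W_indec e_ge0 [f [g [f_lin [g_lin [f_nat [g_nat [g_f _]]]]]]].
by apply: (const_pair_interleaving_absurd R n k M N W e e_ge0 f g).
Qed.

Lemma dI_not_interleaved (R : realType) (n : nat) (k : fieldType) (V W : pmod R n k) :
  (forall e, 0 <= e -> ~ interleaved e V W) -> dI V W = +oo%E.
Proof.
move=> not_interleaved.
rewrite /dI (_ : [set _ | _ in _] = set0)%classic ?ereal_inf0 //.
by apply/seteqP; split => // _ [e [e_ge0 /(not_interleaved _ e_ge0) []]].
Qed.

Theorem proposition5p7 (R : realType) (k : fieldType) (n : nat) :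
  (1 <= n)%N ->
  exists V : pmod R n k,
    [/\ qtame V, usc V &
      exists r : R, 0 < r /\
        forall W : pmod R n k, qtame W -> usc W -> indecomposable W ->
          (r%:E <= dI V W)%E].
Proof.
move=> _; exists (pm_const R n (k^o * k^o)%type).
split; [exact: pm_const_qtame | exact: pm_const_usc |].
have k_neq0 : exists x : k^o, x != 0 by exists 1; exact: oner_neq0.
exists 1; split => // W _ _ W_indec.
rewrite dI_not_interleaved ?leey // => e e_ge0.
exact: (const_pair_not_interleaved k_neq0 k_neq0 W_indec e_ge0).
Qed.
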